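(* Let $\alpha_1\ge\alpha_2\ge\dots>0$ with $\sum_n\alpha_n<\infty$, set $R_n=\sum_{i=n+1}^\infty\alpha_i$ for $n\ge0$, and assume $\alpha_n>R_n$ for every $n\ge1$. Let $\rho$ be the law of $\sum_{j=1}^\infty\varepsilon_j\alpha_j$, where $(\varepsilon_j)$ are i.i.d. with $\mathbb P[\varepsilon_j=1]=\mathbb P[\varepsilon_j=-1]=\frac12$ (equivalently, the infinite convolution of the measures $\frac12(\delta_{\alpha_n}+\delta_{-\alpha_n})$). Then for every integer $n\ge0$: (i) if $I$ is an interval of length $|I|<R_n$, then $\rho(I)\le2^{-n}$; (ii) if $\delta>0$ and $R_n<\frac\delta4$, then $\rho((\lambda-\delta,\lambda+\delta))\ge2^{-n}$ for every $\lambda$ in the support of $\rho$. *)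

From HB Require Import structures.
From mathcomp Require Import all_boot all_order all_algebra.
From mathcomp Require Import all_classical all_reals all_analysis.
Set Implicit Arguments. Unset Strict Implicit. Unset Printing Implicit Defensive.
Import Order.TTheory GRing.Theory Num.Theory.
Import numFieldNormedType.Exports.
Local Open Scope classical_set_scope.
Local Open Scope ring_scope.

Definition mutually_independent d (T : measurableType d) (R : realType)
  (P : probability T R) (X : nat -> T -> R) : Prop :=
  forall (F : seq nat) (B : nat -> set R),
    uniq F -> (forall j, measurable (B j)) ->
    P (\bigcap_(j in [set` F]) (X j @^-1` B j)) =
    (\prod_(j <- F) P (X j @^-1` B j))%E.

Definition rademacher d (T : measurableType d) (R : realType)
  (P : probability T R) (X : T -> R) : Prop :=
  measurable_fun setT X /\
  (forall t, X t = 1 \/ X t = -1) /\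
  P (X @^-1` [set 1]) = (2^-1 : R)%:E /\
  P (X @^-1` [set -1]) = (2^-1 : R)%:E.

Definition rsum (R : realType) (T : Type) (alpha : nat -> R) (eps : nat -> T -> R)
  (t : T) : R :=
  limn (fun N => \sum_(1 <= j < N.+1) eps j t * alpha j).

Definition tail (R : realType) (alpha : nat -> R) (n : nat) : R :=
  limn (fun N => \sum_(n.+1 <= i < N) alpha i).

(* Support of a measure on R: points all of whose open neighbourhoods have
   positive measure (= complement of the largest open null set). *)
Definition msupport (R : realType) (mu : set R -> \bar R) : set R :=
  [set x | forall U : set R, open U -> U x -> (0 < mu U)%E].

From HB Require Import structures.
From mathcomp Require Import all_boot all_order all_algebra.
From mathcomp Require Import all_classical all_reals all_analysis.
From mathcomp Require Import measurable_realfun ring lra.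
Import Order.TTheory GRing.Theory Num.Theory.
Import numFieldNormedType.Exports.
Local Open Scope classical_set_scope.
Local Open Scope ring_scope.

(* Write S(e) = sum_(j >= 1) e_j alpha_j for sign sequences e.  If e and e' first
   differ at k <= n but agree at n+1, then |S(e) - S(e')| >= 2 (alpha_k - R_k) +
   2 alpha_(n+1) > 2 alpha_(n+1) > R_n, the last step because R_n = alpha_(n+1) +
   R_(n+1).  Hence the points of S^-1(I) with a given eps_(n+1) share eps_1, ...,
   eps_(n+1), i.e. lie in one cylinder of probability 2^-(n+1); the two values of
   eps_(n+1) give (i).  Conversely, sign sequences agreeing up to n have sums within
   2 R_n < delta/2 of each other, so if S(t0) is within delta/2 of lambda (such a t0
   exists because lambda is in the support), the level-n cylinder of t0 is mapped into
   (lambda - delta, lambda + delta), which gives (ii). *)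

Lemma sum_nat_le_widen [R : numDomainType] [f : nat -> R] [m1 m2 n1 n2 : nat] :
  (forall i, (m2 <= i)%N -> 0 <= f i) -> (m2 <= m1)%N -> (n1 <= n2)%N ->
  \sum_(m1 <= i < n1) f i <= \sum_(m2 <= i < n2) f i.
Proof.
move=> f0 m21 n12.
rewrite (big_nat_widenl _ _ _ _ _ m21) (big_nat_widen _ _ _ _ _ n12) big_mkcond /=.
by apply: ler_sum_nat => i /andP[m2i _]; case: ifP => // _; exact: f0.
Qed.

Lemma norm_sign_le1 [R : numDomainType] [x : R] : x = 1 \/ x = -1 -> `|x| <= 1.
Proof. by case=> ->; rewrite ?normrN normr1. Qed.

Definition signed_sum {R : realType} (alpha c : nat -> R) : R :=
  limn (fun N => \sum_(1 <= j < N.+1) c j * alpha j).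

Section SignedSums.
Variables (R : realType) (alpha : nat -> R).
Hypothesis alpha_ge0 : forall n, (1 <= n)%N -> 0 <= alpha n.
Hypothesis alpha_summable : cvgn (fun N => \sum_(1 <= j < N.+1) alpha j).

Let partial_sum_le_total N :
  \sum_(1 <= j < N.+1) alpha j <= limn (fun N => \sum_(1 <= j < N.+1) alpha j).
Proof.
apply: (nondecreasing_cvgn_le _ alpha_summable) => m n mn.
exact: sum_nat_le_widen.
Qed.

Lemma is_cvg_tail k : cvgn (fun N => \sum_(k.+1 <= i < N) alpha i).
Proof.
apply: nondecreasing_is_cvgn.
  move=> m n mn; apply: sum_nat_le_widen => // i ki.
  by apply: alpha_ge0; exact: leq_trans ki.
exists (limn (fun N => \sum_(1 <= j < N.+1) alpha j)) => _ [N _ <-].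
apply: le_trans (partial_sum_le_total N).
exact: sum_nat_le_widen.
Qed.

Lemma partial_tail_le_tail k N : \sum_(k.+1 <= i < N) alpha i <= tail alpha k.
Proof.
apply: (nondecreasing_cvgn_le _ (is_cvg_tail k)) => m n mn.
by apply: sum_nat_le_widen => // i ki; apply: alpha_ge0; exact: leq_trans ki.
Qed.

Lemma tail_ge0 k : 0 <= tail alpha k.
Proof. by apply: le_trans (partial_tail_le_tail k 0); rewrite big_geq. Qed.

Lemma tailS k : tail alpha k = alpha k.+1 + tail alpha k.+1.
Proof.
apply: cvg_lim => //.
apply: cvg_trans (near_eq_cvg _) (cvgD (cvg_cst _) (is_cvg_tail k.+1)).
near=> N; rewrite /= big_ltn //; near: N; exact: nbhs_infty_gt.
Unshelve. all: by end_near.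
Qed.

Lemma tail_lt_twice n : tail alpha n.+1 < alpha n.+1 -> tail alpha n < 2 * alpha n.+1.
Proof. by rewrite (tailS n); lra. Qed.

Lemma is_cvg_signed_sum c : (forall j, `|c j| <= 1) ->
  cvgn (fun N => \sum_(1 <= j < N.+1) c j * alpha j).
Proof.
move=> c1.
pose D N := \sum_(1 <= j < N.+1) (1 - c j) * alpha j.
have D_cvg : cvgn D.
  have D_ge0 j : (1 <= j)%N -> 0 <= (1 - c j) * alpha j.
    by move=> j1; rewrite mulr_ge0 ?alpha_ge0 // subr_ge0 (le_trans (ler_norm _)).
  apply: nondecreasing_is_cvgn; first by move=> m n mn; exact: sum_nat_le_widen.
  exists (2 * limn (fun N => \sum_(1 <= j < N.+1) alpha j)) => _ [N _ <-].
  apply: (@le_trans _ _ (2 * \sum_(1 <= j < N.+1) alpha j)).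
    rewrite mulr_sumr; apply: ler_sum_nat => j /andP[j1 _].
    have := alpha_ge0 _ j1; have := c1 j; rewrite ler_norml => /andP[]; nra.
  by rewrite ler_pM2l.
have -> : (fun N => \sum_(1 <= j < N.+1) c j * alpha j) =
    (fun N => \sum_(1 <= j < N.+1) alpha j) - D.
  by apply/funext => N; rewrite !fctE /D -sumrB; apply: eq_bigr => j _; ring.
exact: is_cvgB.
Qed.

Lemma signed_sum_sub_cvg c c' : (forall j, `|c j| <= 1) -> (forall j, `|c' j| <= 1) ->
  (fun N => \sum_(1 <= j < N.+1) (c j - c' j) * alpha j) @ \oo -->
  signed_sum alpha c - signed_sum alpha c'.
Proof.
move=> c1 c'1.
have -> : (fun N => \sum_(1 <= j < N.+1) (c j - c' j) * alpha j) =
    (fun N => \sum_(1 <= j < N.+1) c j * alpha j) -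
    (fun N => \sum_(1 <= j < N.+1) c' j * alpha j).
  by apply/funext => N; rewrite !fctE -sumrB; apply: eq_bigr => j _; ring.
by apply: cvgB; exact: is_cvg_signed_sum.
Qed.

Lemma signed_sum_close n c c' : (forall j, `|c j| <= 1) -> (forall j, `|c' j| <= 1) ->
  (forall j, (1 <= j <= n)%N -> c j = c' j) ->
  `|signed_sum alpha c - signed_sum alpha c'| <= 2 * tail alpha n.
Proof.
move=> c1 c'1 eq_cc'.
apply: cvgr_to_le (cvg_norm (signed_sum_sub_cvg c c' c1 c'1)) _.
near=> N.
have nN : (n <= N)%N by near: N; exact: nbhs_infty_ge.
rewrite (@big_cat_nat _ _ _ n.+1) //= [X in `|X + _|]big_nat_cond big1 ?add0r; last first.
  by move=> j /andP[/eq_cc' -> _]; rewrite subrr mul0r.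
apply: le_trans (ler_norm_sum _ _ _) _.
apply: (@le_trans _ _ (\sum_(n.+1 <= j < N.+1) 2 * alpha j)).
  apply: ler_sum_nat => j /andP[nj _].
  have a0 : 0 <= alpha j by apply: alpha_ge0; exact: leq_ltn_trans (leq0n n) nj.
  rewrite normrM (ger0_norm a0) ler_wpM2r //.
  by apply: le_trans (ler_normB _ _) _; have := c1 j; have := c'1 j; lra.
by rewrite -mulr_sumr ler_pM2l // partial_tail_le_tail.
Unshelve. all: by end_near.
Qed.

Lemma signed_sum_gap n k c c' : (forall j, `|c j| <= 1) -> (forall j, `|c' j| <= 1) ->
  (1 <= k <= n)%N -> (forall j, (1 <= j < k)%N -> c j = c' j) ->
  c k = 1 -> c' k = -1 -> c n.+1 = c' n.+1 ->
  2 * (alpha k - tail alpha k) + 2 * alpha n.+1 <=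
  signed_sum alpha c - signed_sum alpha c'.
Proof.
move=> c1 c'1 /andP[k1 kn] eq_lt_k ck c'k cn.
apply: cvgr_to_ge (signed_sum_sub_cvg c c' c1 c'1) _.
near=> N.
have nN : (n < N)%N by near: N; exact: nbhs_infty_gt.
(* Beyond k each term is at least [- 2 * alpha j], and at [n.+1] it vanishes. *)
pose h j := (c j - c' j) * alpha j + 2 * alpha j.
have h_tail : 2 * alpha n.+1 <= \sum_(k.+1 <= j < N.+1) h j.
  have -> : 2 * alpha n.+1 = \sum_(n.+1 <= j < n.+2) h j.
    by rewrite big_nat1 /h cn subrr mul0r add0r.
  apply: sum_nat_le_widen => // j kj; have a0 : 0 <= alpha j.
    by apply: alpha_ge0; exact: leq_trans kj.
  rewrite /h; have := c1 j; have := c'1 j.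
  by rewrite !ler_norml => /andP[? ?] /andP[? ?]; nra.
have kN : (k < N.+1)%N by rewrite ltnS (leq_trans kn) // ltnW.
rewrite (big_cat_nat k1 (ltnW kN)) /= [X in _ <= X + _]big_nat_cond big1 ?add0r; last first.
  by move=> j /andP[/eq_lt_k -> _]; rewrite subrr mul0r.
rewrite big_ltn // ck c'k.
have -> : \sum_(k.+1 <= j < N.+1) (c j - c' j) * alpha j =
    \sum_(k.+1 <= j < N.+1) h j - 2 * \sum_(k.+1 <= j < N.+1) alpha j.
  by rewrite mulr_sumr -sumrB; apply: eq_bigr => j _; rewrite /h addrK.
have := partial_tail_le_tail k N.+1; lra.
Unshelve. all: by end_near.
Qed.

Hypothesis alpha_gt_tail : forall n, (1 <= n)%N -> tail alpha n < alpha n.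

Lemma signed_sum_prefix_eq n c c' :
  (forall j, c j = 1 \/ c j = -1) -> (forall j, c' j = 1 \/ c' j = -1) ->
  `|signed_sum alpha c - signed_sum alpha c'| < tail alpha n -> c n.+1 = c' n.+1 ->
  forall j, (1 <= j <= n)%N -> c j = c' j.
Proof.
move=> c_sign c'_sign; rewrite ltr_norml => /andP[lt_cc' lt_c'c] cn.
have c1 j := norm_sign_le1 (c_sign j); have c'1 j := norm_sign_le1 (c'_sign j).
have tail_n := tail_lt_twice n (alpha_gt_tail n.+1 (ltn0Sn n)).
elim/ltn_ind => j IH /andP[j1 jn].
have eq_lt_j i : (1 <= i < j)%N -> c i = c' i.
  by move=> /andP[i1 ij]; apply: IH => //; rewrite i1 (leq_trans (ltnW ij) jn).
have jn' : (1 <= j <= n)%N by rewrite j1 jn.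
have tail_j := alpha_gt_tail j j1.
case: (c_sign j) => cj; case: (c'_sign j) => c'j; rewrite ?cj ?c'j //.
- by have := signed_sum_gap n j c c' c1 c'1 jn' eq_lt_j cj c'j cn; lra.
- have eq_lt_j' i (hi : (1 <= i < j)%N) : c' i = c i by rewrite eq_lt_j.
  by have := signed_sum_gap n j c' c c'1 c1 jn' eq_lt_j' c'j cj (esym cn); lra.
Qed.

Section RademacherSeries.
Variables (d : measure_display) (T : measurableType d).
Variables (P : probability T R) (eps : nat -> T -> R).
Hypothesis eps_rad : forall j, rademacher P (eps j).
Hypothesis eps_indep : mutually_independent P eps.

Let eps_sign t j : eps j t = 1 \/ eps j t = -1.
Proof. exact: (eps_rad j).2.1. Qed.

Let eps_bounded t j : `|eps j t| <= 1.
Proof. exact: norm_sign_le1 (eps_sign t j). Qed.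

Let rsumE t : rsum alpha eps t = signed_sum alpha (eps^~ t).
Proof. by []. Qed.

Lemma measurable_rsum_preimage A :
  measurable A -> measurable (rsum alpha eps @^-1` A).
Proof.
move=> mA; rewrite -[_ @^-1` _]setTI.
apply: (measurable_fun_cvg
  (h := fun N t => \sum_(1 <= j < N.+1) eps j t * alpha j)) => //.
- move=> N; apply: measurable_sum => j.
  by apply: measurable_funM; [exact: (eps_rad j).1 | exact: measurable_cst].
- by move=> t _; exact: is_cvg_signed_sum.
Qed.

Definition cylinder t0 m := [set t | forall j, (1 <= j <= m)%N -> eps j t = eps j t0].

Let cylinder_bigcap t0 m :
  cylinder t0 m = \bigcap_(j in [set` iota 1 m]) eps j @^-1` [set eps j t0].
Proof.
by apply/seteqP; split => t /= ct j; move: (ct j); rewrite /= mem_iota add1n ltnS.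
Qed.

Lemma measurable_cylinder t0 m : measurable (cylinder t0 m).
Proof.
rewrite cylinder_bigcap; apply: bigcap_measurableType => j _.
by rewrite -[_ @^-1` _]setTI; apply: (eps_rad j).1 => //; exact: measurable_set1.
Qed.

Lemma prob_cylinder t0 m : P (cylinder t0 m) = (2 ^- m)%:E.
Proof.
rewrite cylinder_bigcap (eps_indep (iota 1 m) (fun j => [set eps j t0])); last first.
- by move=> j; exact: measurable_set1.
- exact: iota_uniq.
rewrite (eq_bigr (fun=> (2^-1)%:E)) => [|j _]; last first.
  by case: (eps_sign t0 j) => ->; [exact: (eps_rad j).2.2.1 | exact: (eps_rad j).2.2.2].
rewrite prodEFin (_ : iota 1 m = index_iota 1 m.+1); last by rewrite /index_iota subn1.
by rewrite (@prodr_const_nat R) subn1 exprVn.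
Qed.

Lemma prob_le_common_signs m B : measurable B ->
  (forall t t0, B t -> B t0 -> forall j, (1 <= j <= m)%N -> eps j t = eps j t0) ->
  (P B <= (2 ^- m)%:E)%E.
Proof.
move=> mB agree.
have [->|/set0P[t0 Bt0]] := eqVneq B set0.
  by rewrite measure0 lee_fin invr_ge0 exprn_ge0.
rewrite -(prob_cylinder t0 m); apply: le_measure; rewrite ?inE //.
  exact: measurable_cylinder.
by move=> t Bt; exact: agree.
Qed.

Lemma rsum_itv_prob_le n (a b : R) (b1 b2 : bool) : b - a < tail alpha n ->
  lee (P (rsum alpha eps @^-1` [set` Interval (BSide b1 a) (BSide b2 b)])) (2 ^- n)%:E.
Proof.
move=> short.
set A := rsum alpha eps @^-1` _.
have mA : measurable A by apply: measurable_rsum_preimage; exact: measurable_itv.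
have A_close t t0 :
    A t -> A t0 -> `|rsum alpha eps t - rsum alpha eps t0| < tail alpha n.
  have in_ab x : [set` Interval (BSide b1 a) (BSide b2 b)] x -> a <= x <= b.
    by move/subset_itvScc => /(_ a b); rewrite /= in_itv; apply; rewrite bnd_simp.
  move=> /in_ab /andP[? ?] /in_ab /andP[? ?]; rewrite ltr_norml; apply/andP; split; lra.
pose E s := eps n.+1 @^-1` [set s].
have mE s : measurable (A `&` E s).
  apply: measurableI mA _; rewrite -[E s]setTI.
  by apply: (eps_rad n.+1).1 => //; exact: measurable_set1.
have half s : (P (A `&` E s) <= (2 ^- n.+1)%:E)%E.
  apply: prob_le_common_signs; first exact: mE.
  move=> t t0 [At Et] [At0 Et0] j /andP[j1]; rewrite leq_eqVlt => /orP[/eqP -> | jn].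
    by rewrite Et Et0.
  apply: (signed_sum_prefix_eq _ _ _ (eps_sign t) (eps_sign t0) (A_close _ _ At At0)).
    by rewrite Et Et0.
  by rewrite j1.
have A_split : A `<=` (A `&` E 1) `|` (A `&` E (-1)).
  by move=> t At; case: (eps_sign t n.+1) => e; [left | right].
have A_le_split : lee (P A) (P (A `&` E 1 `|` A `&` E (-1))).
  by apply: le_measure A_split; rewrite inE //; exact: measurableU.
apply: le_trans A_le_split _.
apply: le_trans (measureU2 _ (mE 1) (mE (-1))) _.
apply: le_trans (leeD (half 1) (half (-1))) _.
by rewrite -EFinD lee_fin exprS invfM; lra.
Qed.

Lemma rsum_ball_prob_ge n (delta lambda : R) : tail alpha n < delta / 4 ->
  msupport (fun A => P (rsum alpha eps @^-1` A)) lambda ->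
  lee (2 ^- n)%:E (P (rsum alpha eps @^-1` `]lambda - delta, lambda + delta[%classic)).
Proof.
move=> small_tail supp.
have tail0 := tail_ge0 n.
set U := rsum alpha eps @^-1` `]lambda - delta / 2, lambda + delta / 2[%classic.
have /set0P[t0 Ut0] : U != set0.
  have : (0 < P U)%E by apply: supp; [exact: itv_open | rewrite /= in_itv /=; lra].
  by apply: contraTneq => ->; rewrite measure0 ltxx.
rewrite -(prob_cylinder t0 n); apply: le_measure; rewrite ?inE.
- exact: measurable_cylinder.
- by apply: measurable_rsum_preimage; exact: measurable_itv.
- move=> t t0_prefix.
  have := signed_sum_close _ _ _ (eps_bounded t) (eps_bounded t0) t0_prefix.
  move: Ut0; rewrite /U /= !in_itv /= !rsumE ler_norml => /andP[? ?] /andP[? ?].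
  by apply/andP; split; lra.
Qed.

End RademacherSeries.

End SignedSums.

Theorem lemma6p6 (R : realType) (d : measure_display) (T : measurableType d)
  (P : probability T R) (alpha : nat -> R) (eps : nat -> T -> R)
  (alpha_pos : forall n, (1 <= n)%N -> 0 < alpha n)
  (alpha_noninc : forall n, (1 <= n)%N -> alpha n.+1 <= alpha n)
  (alpha_summable : cvgn (fun N => \sum_(1 <= j < N.+1) alpha j))
  (alpha_gt_tail : forall n, (1 <= n)%N -> tail alpha n < alpha n)
  (eps_rad : forall j, rademacher P (eps j))
  (eps_indep : mutually_independent P eps) :
  let rho := fun A : set R => P (rsum alpha eps @^-1` A) in
  forall n : nat,
    (forall (a b : R) (b1 b2 : bool), a <= b ->
       b - a < tail alpha n ->
       lee (rho [set` Interval (BSide b1 a) (BSide b2 b)]) (2 ^- n : R)%:E)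
    /\
    (forall delta : R, 0 < delta -> tail alpha n < delta / 4 ->
       forall lambda, msupport rho lambda ->
       (lee (2 ^- n : R)%:E (rho `]lambda - delta, lambda + delta[%classic))).
Proof.
(* Neither the monotonicity of alpha (which follows from alpha n.+1 <= R_n < alpha n)
   nor [a <= b] nor [0 < delta] is needed. *)
have alpha_ge0 k : (1 <= k)%N -> 0 <= alpha k by move=> k1; exact: ltW (alpha_pos k k1).
move=> rho n; split.
- by move=> a b b1 b2 _ short; apply: rsum_itv_prob_le.
- by move=> delta _ small_tail lambda supp; apply: rsum_ball_prob_ge.
Qed.
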